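(* Let $f:[0,1]\to\mathbb{R}$ be $1$-Lipschitz and let $\epsilon>0$. Then there exists an even polynomial $p(z)=\sum_{k=0}^{n/2}p_{2k}z^{2k}$ of degree $n=2\lceil4\epsilon^{-3}\rceil$ such that $\sup_{z\in[0,1]}|p(z)-f(z)|\le\epsilon$ and $|p_{2k}|\le 2^n$ for all $k=1,\dots,n/2$. *)

From Stdlib Require Import Reals Lra Lia.
Open Scope R_scope.

Definition lipschitz1_on01 (f : R -> R) : Prop :=
  forall x y, 0 <= x <= 1 -> 0 <= y <= 1 -> Rabs (f x - f y) <= Rabs (x - y).

Definition is_ceil (x : R) (N : nat) : Prop := INR N - 1 < x <= INR N.

Definition even_poly_eval (c : nat -> R) (N : nat) (z : R) : R :=
  sum_f_R0 (fun k => c k * z ^ (2 * k)) N.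

From Stdlib Require Import Reals Lra Lia.
Open Scope R_scope.

(* Approximate g(t) = f(sqrt t) by its Bernstein polynomial B_N g and take
   p(z) = (B_N g)(z^2).  Since |sqrt s - z| <= (s - z^2)^2 / (2 eps z^2) + eps/2,
   the variance formula for the binomial distribution gives
   |p(z) - f(z)| <= 1/(2 eps N) + eps/2 <= eps.  Expanding the Bernstein basis
   t^k (1-t)^(N-k) in monomials costs at most 2^(N-k) in the l1-norm of the
   coefficients, so the coefficients of B_N g are bounded by 2^N * sum_k C(N,k) = 4^N. *)

(* Unlike Stdlib's real-valued [C], this vanishes above the diagonal. *)
Fixpoint binom (n k : nat) : nat :=
  match n, k with
  | _, O => 1%nat
  | O, S _ => 0%nat
  | S n', S k' => (binom n' k' + binom n' (S k'))%nat
  end.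

Lemma binom_eq0 n k : (n < k)%nat -> binom n k = 0%nat.
Proof.
  revert k; induction n; intros [|k] H; simpl; try lia.
  rewrite !IHn; lia.
Qed.

Lemma binom_n0 n : binom n 0 = 1%nat.
Proof. destruct n; reflexivity. Qed.

Lemma sum_scal a f n : sum_f_R0 (fun i => a * f i) n = a * sum_f_R0 f n.
Proof. induction n; simpl; [ring | rewrite IHn; ring]. Qed.

Lemma sum_f_R0_term_le f d j :
  (forall i, 0 <= f i) -> (j <= d)%nat -> f j <= sum_f_R0 f d.
Proof.
  intros Hf; induction d; intros Hj.
  - replace j with 0%nat by lia; simpl; lra.
  - simpl; destruct (Nat.eq_dec j (S d)) as [->|Hne].
    + pose proof (cond_pos_sum f d Hf); lra.
    + specialize (IHd ltac:(lia)); specialize (Hf (S d)); lra.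
Qed.

(** * Bernstein polynomials *)

Definition bern_basis (N k : nat) (t : R) : R :=
  INR (binom N k) * t ^ k * (1 - t) ^ (N - k).

Definition bernstein (N : nat) (phi : nat -> R) (t : R) : R :=
  sum_f_R0 (fun k => bern_basis N k t * phi k) N.

Lemma bern_basis_ge0 N k t : 0 <= t <= 1 -> 0 <= bern_basis N k t.
Proof.
  intros Ht; unfold bern_basis.
  apply Rmult_le_pos; [apply Rmult_le_pos|];
    [apply pos_INR | apply pow_le; lra | apply pow_le; lra].
Qed.

Lemma bern_basis_S N k t :
  bern_basis (S N) (S k) t = t * bern_basis N k t + (1 - t) * bern_basis N (S k) t.
Proof.
  unfold bern_basis; simpl binom; rewrite plus_INR.
  destruct (Nat.le_gt_cases (S k) N).
  - replace (S N - S k)%nat with (N - k)%nat by lia.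
    replace (N - k)%nat with (S (N - S k)) by lia; simpl; ring.
  - rewrite (binom_eq0 N (S k)) by lia; simpl; ring.
Qed.

Lemma bernstein_ext N phi psi t :
  (forall k, (k <= N)%nat -> phi k = psi k) -> bernstein N phi t = bernstein N psi t.
Proof. intros H; apply sum_eq; intros k Hk; rewrite H; auto. Qed.

Lemma bernstein_sum_beyond N L phi t : (N <= L)%nat ->
  sum_f_R0 (fun k => bern_basis N k t * phi k) L = bernstein N phi t.
Proof.
  induction L; intros H.
  - replace N with 0%nat by lia; reflexivity.
  - destruct (Nat.eq_dec N (S L)) as [->|Hne]; [reflexivity|].
    simpl; rewrite IHL by lia; unfold bern_basis.
    rewrite binom_eq0 by lia; simpl; ring.
Qed.

Lemma bernstein_S N phi t :
  bernstein (S N) phi t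
  = (1 - t) * bernstein N phi t + t * bernstein N (fun k => phi (S k)) t.
Proof.
  unfold bernstein at 1; rewrite decomp_sum by lia; simpl Nat.pred.
  rewrite (sum_eq _ (fun k => t * (bern_basis N k t * phi (S k))
                             + (1 - t) * (bern_basis N (S k) t * phi (S k))))
    by (intros; rewrite bern_basis_S; ring).
  rewrite plus_sum, !sum_scal.
  rewrite <- (bernstein_sum_beyond N (S N) phi t) by lia.
  rewrite (decomp_sum _ (S N)) by lia; simpl Nat.pred.
  assert (Hb0 : bern_basis (S N) 0 t = (1 - t) * bern_basis N 0 t)
    by (unfold bern_basis; rewrite !Nat.sub_0_r, !binom_n0; simpl; ring).
  rewrite Hb0; unfold bernstein; ring.
Qed.

Lemma bernstein_at_0 N phi : bernstein N phi 0 = phi 0%nat.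
Proof.
  revert phi; induction N; intros phi.
  - unfold bernstein, bern_basis; simpl; ring.
  - rewrite bernstein_S, IHN; ring.
Qed.

Lemma bernstein_linear N al be phi psi t :
  bernstein N (fun k => al * phi k + be * psi k) t
  = al * bernstein N phi t + be * bernstein N psi t.
Proof.
  unfold bernstein; rewrite <- !sum_scal, <- plus_sum.
  apply sum_eq; intros; ring.
Qed.

(* The first two moments of the binomial distribution, proved together because
   the recursion [bernstein_S] shifts a quadratic to another quadratic. *)
Lemma bernstein_quadratic N a b c t :
  bernstein N (fun k => a + b * INR k + c * INR k ^ 2) t
  = a + b * INR N * t + c * (INR N * t + INR N * (INR N - 1) * t ^ 2).
Proof.
  revert a b c; induction N; intros a b c.
  - unfold bernstein, bern_basis; simpl; ring.
  - rewrite bernstein_S, IHN.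
    rewrite (bernstein_ext N _ (fun k => (a + b + c) + (b + 2 * c) * INR k + c * INR k ^ 2))
      by (intros; rewrite S_INR; ring).
    rewrite IHN, S_INR; ring.
Qed.

Lemma bernstein_const1 N t : bernstein N (fun _ => 1) t = 1.
Proof.
  rewrite (bernstein_ext N _ (fun k => 1 + 0 * INR k + 0 * INR k ^ 2)) by (intros; ring).
  rewrite bernstein_quadratic; ring.
Qed.

Lemma bernstein_sub_const N phi a t :
  bernstein N (fun k => phi k - a) t = bernstein N phi t - a.
Proof.
  rewrite (bernstein_ext N _ (fun k => 1 * phi k + (- a) * 1)) by (intros; ring).
  rewrite bernstein_linear, bernstein_const1; ring.
Qed.

Lemma bernstein_variance N t : (0 < N)%nat ->
  bernstein N (fun k => (INR k / INR N - t) ^ 2) t = t * (1 - t) / INR N.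
Proof.
  intros HN; pose proof (lt_0_INR N HN).
  rewrite (bernstein_ext N _
             (fun k => t ^ 2 + (- 2 * t / INR N) * INR k + (1 / INR N ^ 2) * INR k ^ 2))
    by (intros; field; lra).
  rewrite bernstein_quadratic; field; lra.
Qed.

Lemma bernstein_monotone N phi psi t : 0 <= t <= 1 ->
  (forall k, (k <= N)%nat -> phi k <= psi k) -> bernstein N phi t <= bernstein N psi t.
Proof.
  intros Ht H; apply sum_Rle; intros k Hk.
  apply Rmult_le_compat_l; [apply bern_basis_ge0 | apply H]; auto.
Qed.

Lemma bernstein_abs N phi t : 0 <= t <= 1 ->
  Rabs (bernstein N phi t) <= bernstein N (fun k => Rabs (phi k)) t.
Proof.
  intros Ht; eapply Rle_trans; [apply sum_f_R0_triangle|].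
  right; apply sum_eq; intros k Hk.
  rewrite Rabs_mult, (Rabs_pos_eq (bern_basis _ _ _)); auto using bern_basis_ge0.
Qed.

Lemma sum_binom N : sum_f_R0 (fun k => INR (binom N k)) N = 2 ^ N.
Proof.
  pose proof (bernstein_const1 N (1 / 2)) as H; unfold bernstein, bern_basis in H.
  rewrite (sum_eq _ (fun k => (1 / 2) ^ N * INR (binom N k))), sum_scal in H.
  - assert (E : (1 / 2) ^ N * 2 ^ N = 1)
      by (rewrite <- Rpow_mult_distr; replace (1 / 2 * 2) with 1 by field; apply pow1).
    apply Rmult_eq_reg_l with ((1 / 2) ^ N); [lra|].
    apply pow_nonzero; lra.
  - intros k Hk; replace (1 - 1 / 2) with (1 / 2) by field.
    rewrite Rmult_1_r, Rmult_assoc, <- pow_add.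
    replace (k + (N - k))%nat with N by lia; ring.
Qed.

(** * Polynomials with bounded coefficients *)

Definition poly_l1_le (d : nat) (p : R -> R) (B : R) : Prop :=
  exists c : nat -> R,
    (forall j, (d < j)%nat -> c j = 0) /\
    (forall t, p t = sum_f_R0 (fun j => c j * t ^ j) d) /\
    sum_f_R0 (fun j => Rabs (c j)) d <= B.

Lemma poly_l1_le_ext d p q B :
  (forall t, p t = q t) -> poly_l1_le d p B -> poly_l1_le d q B.
Proof.
  intros E (c & Hdeg & Hp & HB); exists c; repeat split; auto.
  intros t; rewrite <- E; auto.
Qed.

Lemma poly_l1_le_weaken d p B B' : B <= B' -> poly_l1_le d p B -> poly_l1_le d p B'.
Proof. intros E (c & Hdeg & Hp & HB); exists c; repeat split; auto; lra. Qed.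

Lemma poly_l1_le_S d p B : poly_l1_le d p B -> poly_l1_le (S d) p B.
Proof.
  intros (c & Hdeg & Hp & HB); exists c; repeat split.
  - intros; apply Hdeg; lia.
  - intros t; simpl; rewrite Hdeg, <- Hp by lia; ring.
  - simpl; rewrite Hdeg, Rabs_R0 by lia; lra.
Qed.

Lemma poly_l1_le_add d p q B1 B2 :
  poly_l1_le d p B1 -> poly_l1_le d q B2 -> poly_l1_le d (fun t => p t + q t) (B1 + B2).
Proof.
  intros (c & Hdeg & Hp & HB) (e & Gdeg & Gq & GB).
  exists (fun j => c j + e j); repeat split.
  - intros; rewrite Hdeg, Gdeg by auto; ring.
  - intros t; rewrite Hp, Gq, <- plus_sum; apply sum_eq; intros; ring.
  - apply Rle_trans with (sum_f_R0 (fun j => Rabs (c j) + Rabs (e j)) d).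
    + apply sum_Rle; intros; apply Rabs_triang.
    + rewrite plus_sum; lra.
Qed.

Lemma poly_l1_le_scal d p B a :
  poly_l1_le d p B -> poly_l1_le d (fun t => a * p t) (Rabs a * B).
Proof.
  intros (c & Hdeg & Hp & HB); exists (fun j => a * c j); repeat split.
  - intros; rewrite Hdeg by auto; ring.
  - intros t; rewrite Hp, <- sum_scal; apply sum_eq; intros; ring.
  - rewrite (sum_eq _ (fun j => Rabs a * Rabs (c j))) by (intros; apply Rabs_mult).
    rewrite sum_scal; apply Rmult_le_compat_l; auto using Rabs_pos.
Qed.

Lemma poly_l1_le_sum d n (p : nat -> R -> R) (B : nat -> R) :
  (forall k, (k <= n)%nat -> poly_l1_le d (p k) (B k)) ->
  poly_l1_le d (fun t => sum_f_R0 (fun k => p k t) n) (sum_f_R0 B n).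
Proof.
  induction n; intros H; simpl.
  - apply poly_l1_le_ext with (p 0%nat); auto.
  - apply poly_l1_le_add; auto.
Qed.

Lemma poly_l1_le_mul_id d p B :
  poly_l1_le d p B -> poly_l1_le (S d) (fun t => t * p t) B.
Proof.
  intros (c & Hdeg & Hp & HB).
  exists (fun j => match j with O => 0 | S j' => c j' end); repeat split.
  - intros [|j] Hj; [lia | apply Hdeg; lia].
  - intros t; rewrite decomp_sum by lia; simpl Nat.pred.
    rewrite Hp, <- sum_scal; simpl; rewrite Rmult_0_l, Rplus_0_l.
    apply sum_eq; intros; ring.
  - rewrite decomp_sum by lia; simpl Nat.pred; rewrite Rabs_R0, Rplus_0_l; auto.
Qed.

Lemma poly_l1_le_mul_1_sub d p B :
  poly_l1_le d p B -> poly_l1_le (S d) (fun t => (1 - t) * p t) (2 * B).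
Proof.
  intros H.
  apply poly_l1_le_ext with (fun t => p t + (-1) * (t * p t)); [intros; ring|].
  apply poly_l1_le_weaken with (B + Rabs (-1) * B);
    [rewrite Rabs_left by lra; lra|].
  apply poly_l1_le_add; [apply poly_l1_le_S | apply poly_l1_le_scal, poly_l1_le_mul_id]; auto.
Qed.

Lemma poly_l1_le_pow k : poly_l1_le k (fun t => t ^ k) 1.
Proof.
  induction k.
  - exists (fun j => match j with O => 1 | _ => 0 end); repeat split.
    + intros [|j] Hj; [lia | auto].
    + intros; simpl; ring.
    + simpl; rewrite Rabs_R1; lra.
  - apply poly_l1_le_mul_id in IHk; auto.
Qed.

Lemma poly_l1_le_basis k m : poly_l1_le (k + m) (fun t => t ^ k * (1 - t) ^ m) (2 ^ m).
Proof.
  induction m.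
  - rewrite Nat.add_0_r.
    apply poly_l1_le_ext with (fun t => t ^ k); [intros; simpl; ring | apply poly_l1_le_pow].
  - rewrite Nat.add_succ_r.
    apply poly_l1_le_ext with (fun t => (1 - t) * (t ^ k * (1 - t) ^ m)); [intros; simpl; ring|].
    apply poly_l1_le_mul_1_sub; auto.
Qed.

Lemma poly_l1_le_coef d p B : poly_l1_le d p B ->
  exists c : nat -> R,
    (forall t, p t = sum_f_R0 (fun j => c j * t ^ j) d) /\ forall j, Rabs (c j) <= B.
Proof.
  intros (c & Hdeg & Hp & HB); exists c; split; auto.
  assert (Hle : forall j, (j <= d)%nat -> Rabs (c j) <= B).
  { intros j Hj; eapply Rle_trans; [|apply HB].
    apply (sum_f_R0_term_le (fun j => Rabs (c j))); auto using Rabs_pos. }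
  intros j; destruct (Nat.le_gt_cases j d); auto.
  rewrite Hdeg, Rabs_R0 by auto.
  eapply Rle_trans; [apply Rabs_pos | apply (Hle 0%nat); lia].
Qed.

Lemma bernstein_l1_le N phi m : (forall k, (k <= N)%nat -> Rabs (phi k) <= m) ->
  poly_l1_le N (bernstein N phi) (m * (2 ^ N * 2 ^ N)).
Proof.
  intros Hphi.
  apply poly_l1_le_ext with
    (fun t => sum_f_R0 (fun k => (INR (binom N k) * phi k) * (t ^ k * (1 - t) ^ (N - k))) N).
  { intros t; apply sum_eq; intros; unfold bern_basis; ring. }
  apply poly_l1_le_weaken with
    (sum_f_R0 (fun k => Rabs (INR (binom N k) * phi k) * 2 ^ (N - k)) N).
  - replace (m * (2 ^ N * 2 ^ N))
      with (sum_f_R0 (fun k => INR (binom N k) * m * 2 ^ N) N)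
      by (rewrite (sum_eq _ (fun k => m * 2 ^ N * INR (binom N k))) by (intros; ring);
          rewrite sum_scal, sum_binom; ring).
    apply sum_Rle; intros k Hk.
    rewrite Rabs_mult, (Rabs_pos_eq (INR _)) by apply pos_INR.
    pose proof (pos_INR (binom N k)); pose proof (Rabs_pos (phi k)).
    apply Rmult_le_compat; auto using Rmult_le_pos, pow_le, Rmult_le_compat_l with real.
    apply Rle_pow; [lra | lia].
  - apply poly_l1_le_sum; intros k Hk; apply poly_l1_le_scal.
    pose proof (poly_l1_le_basis k (N - k)) as Hb.
    replace (k + (N - k))%nat with N in Hb by lia; exact Hb.
Qed.

(** * Approximation of [f] by [(B_N (f o sqrt))(z^2)] *)

Lemma Rabs_le_sqr_div e x : 0 < e -> Rabs x <= x ^ 2 / (2 * e) + e / 2.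
Proof.
  intros He; rewrite <- pow2_abs.
  assert (0 <= (Rabs x - e) ^ 2 / (2 * e))
    by (apply Rmult_le_pos; [apply pow2_ge_0 | left; apply Rinv_0_lt_compat; lra]).
  replace (Rabs x ^ 2 / (2 * e) + e / 2) with (Rabs x + (Rabs x - e) ^ 2 / (2 * e))
    by (field; lra); lra.
Qed.

Lemma Rabs_sub_le_sqr_gap s z eps : 0 <= s -> 0 < z -> 0 < eps ->
  Rabs (s - z) <= / (2 * eps * z ^ 2) * (s ^ 2 - z ^ 2) ^ 2 + eps / 2.
Proof.
  intros Hs Hz He.
  assert (Hsq : (s - z) ^ 2 * z ^ 2 <= (s ^ 2 - z ^ 2) ^ 2).
  { replace ((s ^ 2 - z ^ 2) ^ 2) with ((s - z) ^ 2 * (s + z) ^ 2) by ring.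
    apply Rmult_le_compat_l; [apply pow2_ge_0 | nra]. }
  assert (Hpos : 0 < / (2 * eps * z ^ 2))
    by (apply Rinv_0_lt_compat; pose proof (pow_lt z 2 Hz); nra).
  eapply Rle_trans; [apply (Rabs_le_sqr_div eps); auto|].
  apply Rplus_le_compat_r.
  replace ((s - z) ^ 2 / (2 * eps)) with (/ (2 * eps * z ^ 2) * ((s - z) ^ 2 * z ^ 2))
    by (field; lra).
  apply Rmult_le_compat_l; lra.
Qed.

Lemma sqrt_ratio_01 k N : (0 < N)%nat -> (k <= N)%nat -> 0 <= sqrt (INR k / INR N) <= 1.
Proof.
  intros HN Hk; pose proof (lt_0_INR N HN); split; [apply sqrt_pos|].
  rewrite <- sqrt_1; apply sqrt_le_1_alt.
  apply Rmult_le_reg_r with (INR N); [lra|].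
  unfold Rdiv; rewrite Rmult_assoc, Rinv_l, Rmult_1_r, Rmult_1_l by lra.
  apply le_INR; auto.
Qed.

Lemma bernstein_sqrt_approx f N eps z :
  lipschitz1_on01 f -> (0 < N)%nat -> 0 < eps -> 0 <= z <= 1 ->
  Rabs (bernstein N (fun k => f (sqrt (INR k / INR N))) (z ^ 2) - f z)
  <= / (2 * eps * INR N) + eps / 2.
Proof.
  intros Hf HN He Hz; pose proof (lt_0_INR N HN).
  assert (Hbound : 0 < / (2 * eps * INR N) + eps / 2)
    by (pose proof (Rinv_0_lt_compat (2 * eps * INR N) ltac:(nra)); lra).
  destruct (Req_dec z 0) as [->|Hz0].
  { rewrite pow_i, bernstein_at_0 by lia; simpl INR; unfold Rdiv.
    rewrite Rmult_0_l, sqrt_0, Rminus_diag, Rabs_R0; lra. }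
  set (t := z ^ 2).
  assert (Ht : 0 <= t <= 1) by (unfold t; simpl; nra).
  assert (Htp : 0 < t) by (apply pow_lt; lra).
  rewrite <- bernstein_sub_const.
  eapply Rle_trans; [apply bernstein_abs; auto|].
  eapply Rle_trans.
  { apply bernstein_monotone with
      (psi := fun k => / (2 * eps * t) * (INR k / INR N - t) ^ 2 + eps / 2 * 1); auto.
    intros k Hk; pose proof (sqrt_ratio_01 k N HN Hk).
    eapply Rle_trans; [apply Hf; lra|].
    set (s := sqrt (INR k / INR N)).
    rewrite Rmult_1_r, <- (pow2_sqrt (INR k / INR N))
      by (apply Rmult_le_pos; [apply pos_INR | left; apply Rinv_0_lt_compat; lra]).
    apply Rabs_sub_le_sqr_gap; lra. }
  rewrite bernstein_linear, bernstein_variance, bernstein_const1, Rmult_1_r by auto.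
  apply Rplus_le_compat_r.
  replace (/ (2 * eps * t) * (t * (1 - t) / INR N)) with ((1 - t) * / (2 * eps * INR N))
    by (field; lra).
  pose proof (Rinv_0_lt_compat (2 * eps * INR N) ltac:(nra)); nra.
Qed.

Lemma sqr_mul_ge1_of_inv_cube eps N : 0 < eps -> / eps ^ 3 <= INR N -> 1 <= eps ^ 2 * INR N.
Proof.
  intros He HN.
  assert (Hcube : 1 <= eps ^ 3 * INR N).
  { replace 1 with (eps ^ 3 * / eps ^ 3) by (field; lra).
    apply Rmult_le_compat_l; [apply pow_le | ]; lra. }
  assert (HN1 : 1 <= INR N).
  { destruct N; [simpl in Hcube; lra | apply (le_INR 1); lia]. }
  destruct (Rle_lt_dec eps 1).
  - assert (eps ^ 3 <= eps ^ 2) by (simpl; nra); nra.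
  - assert (1 <= eps ^ 2) by (simpl; nra); nra.
Qed.

Definition add_constant_coef (c : nat -> R) (a : R) (k : nat) : R :=
  match k with O => c O + a | S _ => c k end.

Lemma even_poly_eval_add_constant c a N z :
  even_poly_eval (add_constant_coef c a) N z = a + sum_f_R0 (fun k => c k * (z ^ 2) ^ k) N.
Proof.
  unfold even_poly_eval; induction N.
  - simpl; ring.
  - cbn [sum_f_R0]; rewrite IHN, pow_mult; unfold add_constant_coef; ring.
Qed.

Theorem lemma4 (f : R -> R) (eps : R) (N : nat) :
  lipschitz1_on01 f -> 0 < eps -> is_ceil (4 / eps ^ 3) N ->
  exists c : nat -> R,
    (forall z, 0 <= z <= 1 -> Rabs (even_poly_eval c N z - f z) <= eps) /\
    (forall k, (1 <= k <= N)%nat -> Rabs (c k) <= 2 ^ (2 * N)).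
Proof.
  intros Hf He [_ Hceil].
  assert (HN : 1 <= eps ^ 2 * INR N).
  { apply sqr_mul_ge1_of_inv_cube; auto.
    pose proof (Rinv_0_lt_compat _ (pow_lt eps 3 He)); unfold Rdiv in Hceil; lra. }
  assert (HNpos : (0 < N)%nat) by (apply INR_lt; simpl; nra).
  set (phi := fun k => f (sqrt (INR k / INR N))).
  assert (Hphi : forall k, (k <= N)%nat -> Rabs (phi k - f 0) <= 1).
  { intros k Hk; pose proof (sqrt_ratio_01 k N HNpos Hk).
    eapply Rle_trans; [apply Hf; lra|]; rewrite Rminus_0_r, Rabs_pos_eq; lra. }
  destruct (poly_l1_le_coef _ _ _ (bernstein_l1_le N _ 1 Hphi)) as (c & Hc & Hcb).
  exists (add_constant_coef c (f 0)); split.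
  - intros z Hz.
    rewrite even_poly_eval_add_constant, <- Hc, bernstein_sub_const.
    replace (f 0 + (bernstein N phi (z ^ 2) - f 0) - f z)
      with (bernstein N phi (z ^ 2) - f z) by ring.
    eapply Rle_trans; [apply (bernstein_sqrt_approx f N eps); auto|].
    pose proof (lt_0_INR N HNpos).
    apply Rmult_le_reg_r with (2 * eps * INR N); [nra|].
    rewrite Rmult_plus_distr_r, Rinv_l by nra; nra.
  - intros [|k] Hk; [lia|]; simpl add_constant_coef.
    replace (2 ^ (2 * N)) with (1 * (2 ^ N * 2 ^ N))
      by (rewrite Rmult_1_l, <- pow_add; f_equal; lia).
    apply Hcb.
Qed.
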